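(* Let $F(x)=\sum_{n\ge 1} f(n)x^n$ be a formal power series with $f(1)\neq 0$ and composita $F^{\Delta}(n,k)$ (so $F^{\Delta}(1,1)=f(1)$), and let $A(x)$ be its reverse (compositional inverse) series, i.e. the formal power series with $A(0)=0$ and $F(A(x))=x$. Then the composita of $A$ is, for $n\ge m\ge 1$, $$A^{\Delta}(n,m)=\begin{cases}\dfrac{1}{F^{\Delta}(1,1)^n}, & n=m,\\[6pt] \dfrac{m}{n\,F^{\Delta}(1,1)^n}\displaystyle\sum_{k=1}^{n-m}\binom{n+k-1}{n-1}\sum_{j=1}^{k}\frac{(-1)^j}{F^{\Delta}(1,1)^j}\binom{k}{j}F^{\Delta}(n-m+j,j), & n>m.\end{cases}$$
   Context: All generating functions are formal power series in $x$. For a power series $F(x)=\sum_{n\ge 1} f(n)x^n$ with zero constant term, its composita is the two-variable function $F^{\Delta}(n,k)$ ($n\ge k\ge 1$) defined by $F^{\Delta}(n,k)=\sum_{\lambda_1+\cdots+\lambda_k=n}f(\lambda_1)f(\lambda_2)\cdots f(\lambda_k)$, where the sum runs over all compositions of $n$ into exactly $k$ positive integer parts; equivalently $[F(x)]^k=\sum_{n\ge k}F^{\Delta}(n,k)x^n$. *)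

(* Formal power series over a ring R are represented by their
   coefficient sequences  nat -> R  (coefficient of x^n at index n). *)
From HB Require Import structures.
From mathcomp Require Import all_boot all_order all_algebra.
Set Implicit Arguments. Unset Strict Implicit. Unset Printing Implicit Defensive.
Import Order.TTheory GRing.Theory Num.Theory.
Local Open Scope ring_scope.

Section FPS.
Variable R : pzRingType.

Definition fps_mul (a b : nat -> R) : nat -> R :=
  fun n => \sum_(i < n.+1) a i * b (n - i)%N.

Definition fps_one : nat -> R := fun n => (n == 0%N)%:R.
Definition fps_X : nat -> R := fun n => (n == 1%N)%:R.

Definition fps_pow (a : nat -> R) (k : nat) : nat -> R := iter k (fps_mul a) fps_one.

(* composition F(A(x)) for A with zero constant term:
   [x^n] F(A(x)) = \sum_{k=0}^n f(k) [x^n] A(x)^k *)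
Definition fps_comp (f a : nat -> R) : nat -> R :=
  fun n => \sum_(k < n.+1) f k * fps_pow a k n.

(* Compositions are encoded as
   finite functions 'I_k -> 'I_n.+1 with positive values summing to n. *)
Definition composita (f : nat -> R) (n k : nat) : R :=
  \sum_(t : {ffun 'I_k -> 'I_n.+1} |
          [forall i, (0 < val (t i))%N] && ((\sum_(i < k) val (t i))%N == n))
     \prod_(i < k) f (val (t i)).

End FPS.

From HB Require Import structures.
From mathcomp Require Import all_boot all_order all_algebra.
From mathcomp Require Import ring zify.
Import Order.TTheory GRing.Theory Num.Theory.
Local Open Scope ring_scope.

(* Series are handled through truncations: a series g becomes the polynomial
   T g = \sum_(j <= L) g j x^j for L = 2n, and composita g i k = [x^i] (T g)^k.
   Writing T f = x Psi and letting Phi be an inverse of Psi modulo x^(n+1):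
   - Lagrange inversion (section Reversion): for 1 <= m <= n,
     [x^n] A^m = m/n [x^(n-m)] Phi^n.  Both sides solve the triangular system
     \sum_k [x^k] (x Psi)^m' X_k = [n == m'] (1 <= m' <= n) whose diagonal
     f(1)^m' is invertible: the left side because (x Psi)(A) = x, the right side
     by a residue computation (section LagrangeResidue) resting on
     [x^k] x p' p^(k-1) = [x^k] p^k.
   - Binomial series (section TruncatedInverse): with c = 1/f(1) and
     q = 1 - c Psi, which has no constant term, Phi = c \sum_(k <= n) q^k and
     Phi^n = c^n \sum_k C(n-1+k, k) q^k modulo x^(n+1); expanding each
     q^k = (1 - c Psi)^k by the binomial theorem expresses [x^N] Phi^n through
     [x^N] Psi^j = composita f (N + j) j. *)

Definition congX {R : nzRingType} (M : nat) (p q : {poly R}) :=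
  forall i, (i < M)%N -> p`_i = q`_i.

Section Truncation.
Context {R : nzRingType}.
Implicit Types p q : {poly R}.

Lemma congX_sym M p q : congX M p q -> congX M q p.
Proof. by move=> h i hi; rewrite h. Qed.

Lemma congX_trans M p q r : congX M p q -> congX M q r -> congX M p r.
Proof. by move=> h1 h2 i hi; rewrite h1 ?h2. Qed.

Lemma congX_weak M M' p q : (M' <= M)%N -> congX M p q -> congX M' p q.
Proof. by move=> hM h i hi; apply: h; apply: leq_trans hM. Qed.

Lemma congX_add M p p' q q' :
  congX M p p' -> congX M q q' -> congX M (p + q) (p' + q').
Proof. by move=> h1 h2 i hi; rewrite !coefD h1 ?h2. Qed.

Lemma congX_opp M p p' : congX M p p' -> congX M (- p) (- p').
Proof. by move=> h i hi; rewrite !coefN h. Qed.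

Lemma congX_muln M p q k : congX M p q -> congX M (p *+ k) (q *+ k).
Proof. by move=> h i hi; rewrite !coefMn h. Qed.

(* Coefficient i of a product only involves coefficients of index <= i. *)
Lemma congX_mul M p p' q q' :
  congX M p p' -> congX M q q' -> congX M (p * q) (p' * q').
Proof.
move=> h1 h2 i hi; rewrite !coefM; apply: eq_bigr => j _.
have hj : (j < M)%N by apply: leq_ltn_trans hi; rewrite -ltnS.
have hj' : (i - j < M)%N by apply: leq_ltn_trans hi; rewrite leq_subr.
by rewrite h1 // h2.
Qed.

Lemma congX_exp M p p' k : congX M p p' -> congX M (p ^+ k) (p' ^+ k).
Proof.
move=> h; elim: k => [|k IH]; first by rewrite !expr0.
by rewrite !exprS; apply: congX_mul.
Qed.

Lemma coef_XD p j : ('X * p^`())`_j = p`_j *+ j.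
Proof. by case: j => [|j]; rewrite coefXM ?mulr0n //= coef_deriv. Qed.

Lemma congX_XD M p q : congX M p q -> congX M ('X * p^`()) ('X * q^`()).
Proof. by move=> h i hi; rewrite !coef_XD h. Qed.

Lemma congX_addXn M p r : congX M (p + 'X^M * r) p.
Proof. by move=> i hi; rewrite coefD coefXnM hi addr0. Qed.

Lemma divX p : p`_0 = 0 -> p = 'X * drop_poly 1 p.
Proof.
by move=> h0; apply/polyP => -[|i]; rewrite coefXM ?h0 //= coef_drop_poly addn1.
Qed.

Lemma coef_XmulX k p i :
  (('X * p) ^+ k)`_i = if (i < k)%N then 0 else (p ^+ k)`_(i - k).
Proof. by rewrite exprMn_comm ?coefXnM //; exact/commr_sym/commr_polyX. Qed.

Lemma coef_exp_small (A : {poly R}) k i : A`_0 = 0 -> (i < k)%N -> (A ^+ k)`_i = 0.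
Proof. by move=> /divX -> hik; rewrite coef_XmulX hik. Qed.

End Truncation.

Lemma sum_ord_trunc {V : nmodType} (F : nat -> V) K K0 : (K0 <= K)%N ->
  (forall k, (K0 <= k)%N -> F k = 0) ->
  \sum_(k < K) F k = \sum_(k < K0) F k.
Proof.
move=> hK hF; rewrite (big_ord_widen _ _ hK) [in RHS]big_mkcond /=.
apply: eq_bigr => k _; case: ifP => // /negbT; rewrite -leqNgt => h.
by rewrite hF.
Qed.

Section SeriesAsPolynomials.
Context {R : comNzRingType}.
Implicit Types (g : nat -> R) (p A : {poly R}).

Lemma coef_comp_trunc p A n : A`_0 = 0 ->
  (p \Po A)`_n = \sum_(k < n.+1) p`_k * (A ^+ k)`_n.
Proof.
move=> hA0; rewrite coef_comp_poly.
pose F k := p`_k * (A ^+ k)`_n.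
have F_high k : (size p <= k)%N -> F k = 0.
  by move=> hk; rewrite /F nth_default ?mul0r.
have F_low k : (n.+1 <= k)%N -> F k = 0.
  by move=> hk; rewrite /F coef_exp_small ?mulr0.
rewrite -(sum_ord_trunc F _ _ (leq_addr n.+1 _) F_high).
by rewrite (sum_ord_trunc F _ _ (leq_addl _ _) F_low).
Qed.

Lemma fps_pow_poly g L k i : (i <= L)%N ->
  fps_pow g k i = ((\poly_(j < L.+1) g j) ^+ k)`_i.
Proof.
elim: k i => [|k IH] i hi; first by rewrite expr0 coef1.
rewrite -[fps_pow g k.+1]/(fps_mul g (fps_pow g k)) exprS coefM.
apply: eq_bigr => j _.
have hj : (j < L.+1)%N by rewrite ltnS; apply: leq_trans hi; rewrite -ltnS.
by rewrite coef_poly hj IH // (leq_trans _ hi) ?leq_subr.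
Qed.

(* The composita is a coefficient of a power: expanding the product of k copies
   of \sum_j g j x^j indexes the monomials by the compositions of i into k parts. *)
Lemma composita_poly g i k : g 0%N = 0 ->
  composita g i k = ((\poly_(j < i.+1) g j) ^+ k)`_i.
Proof.
move=> hg0; rewrite poly_def.
rewrite (_ : _ ^+ k = \prod_(l < k) \sum_(j < i.+1) g j *: 'X^j); last first.
  by rewrite prodr_const card_ord.
rewrite bigA_distr_bigA coef_sum /composita big_mkcond; apply: eq_bigr => t _ /=.
have -> : \prod_(l < k) (g (t l) *: 'X^(t l)) =
    (\prod_(l < k) g (t l)) *: 'X^(\sum_(l < k) t l)%N.
  rewrite -prodrXr -mul_polyC rmorph_prod -big_split /=.
  by apply: eq_bigr => l _; rewrite mul_polyC.
rewrite coefZ coefXn eq_sym.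
case: eqP => hs; rewrite ?andbT ?andbF ?mulr0 ?mulr1 //.
case H: [forall l, _] => //; move/negbT: H; rewrite negb_forall => /existsP [l].
rewrite -leqNgt leqn0 => /eqP hl.
by rewrite (bigD1 l) //= hl hg0 mul0r.
Qed.

Lemma composita_trunc g L i k : g 0%N = 0 -> (i <= L)%N ->
  composita g i k = ((\poly_(j < L.+1) g j) ^+ k)`_i.
Proof. by move=> hg hi; rewrite composita_poly // -!fps_pow_poly. Qed.

Lemma fps_comp_poly (f a : nat -> R) L i : a 0%N = 0 -> (i <= L)%N ->
  ((\poly_(j < L.+1) f j) \Po (\poly_(j < L.+1) a j))`_i = fps_comp f a i.
Proof.
move=> ha0 hi; rewrite coef_comp_trunc ?coef_poly //.
apply: eq_bigr => j _; rewrite -fps_pow_poly // coef_poly ifT //.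
by rewrite ltnS (leq_trans _ hi) // -ltnS.
Qed.

End SeriesAsPolynomials.

Section BinomialSeries.
Context {R : comNzRingType}.

Lemma telescope (q : R) (u v : nat -> nat) N :
  u 0%N = v 0%N -> (forall k, u k.+1 = v k.+1 + u k)%N ->
  (\sum_(k < N.+1) q ^+ k *+ u k) * (1 - q) =
  \sum_(k < N.+1) q ^+ k *+ v k - q ^+ N.+1 *+ u N.
Proof.
move=> h0 hS; elim: N => [|N IH]; first by rewrite !big_ord1 h0 expr1 expr0; ring.
rewrite big_ord_recr /= mulrDl IH [in RHS]big_ord_recr /= hS.
by rewrite !exprS mulrnDr; ring.
Qed.

Lemma neg_binomial_trunc (q : R) N r : exists x,
  (\sum_(k < N.+1) q ^+ k *+ 'C(r + k, k)) * (1 - q) ^+ r.+1 = 1 + q ^+ N.+1 * x.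
Proof.
elim: r => [|r [x hx]].
  exists (- 1); rewrite expr1.
  rewrite (telescope q (fun k => 'C(0 + k, k)) (fun k => (k == 0)%N)) //; last first.
    by move=> k; rewrite !add0n !binn.
  rewrite big_ord_recl /= big1 ?addr0 ?add0n ?binn ?expr0 //; ring.
exists (x - (1 - q) ^+ r.+1 *+ 'C(r.+1 + N, N)).
rewrite exprS mulrA (telescope q (fun k => 'C(r.+1 + k, k)) (fun k => 'C(r + k, k))).
- by rewrite mulrBl hx; ring.
- by rewrite !addn0 !bin0.
- by move=> k; rewrite addnS binS addSnnS addnC.
Qed.

End BinomialSeries.

Lemma triangular_system_zero (R : idomainType) N (E : nat -> nat -> R) (D : nat -> R) :
  (forall m', (1 <= m')%N -> (m' <= N)%N -> \sum_(k < N.+1) E k m' * D k = 0) ->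
  (forall k m', (k < m')%N -> E k m' = 0) ->
  (forall m', E m' m' != 0) ->
  forall k, (1 <= k)%N -> (k <= N)%N -> D k = 0.
Proof.
move=> hsys hlow hdiag.
have step k : (1 <= k)%N -> (k <= N)%N ->
    (forall k', (k < k')%N -> (k' <= N)%N -> D k' = 0) -> D k = 0.
  move=> h1 h2 hhigh; have hkN : (k < N.+1)%N by rewrite ltnS.
  have := hsys k h1 h2; rewrite (bigD1 (Ordinal hkN)) //= big1 ?addr0.
    by move/eqP; rewrite mulf_eq0 (negbTE (hdiag k)) => /eqP.
  move=> i hi; case: (ltngtP i k) => hik; first by rewrite hlow ?mul0r.
    by rewrite hhigh ?mulr0 // -ltnS.
  by move: hi; rewrite (_ : i = Ordinal hkN) ?eqxx //; apply: val_inj.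
suff H d k : (N - k <= d)%N -> (1 <= k)%N -> (k <= N)%N -> D k = 0.
  by move=> k; apply: (H N); rewrite leq_subr.
elim: d k => [|d IH] k hd h1 h2; apply: step => // k' hkk' hk'; first lia.
by apply: IH => //; lia.
Qed.

Lemma natf_pchar0_neq0 {R : fieldType} : [pchar R] =i pred0 ->
  forall k, (0 < k)%N -> k%:R != 0 :> R.
Proof. by move=> hchar k hk; rewrite ((pcharf0P R).1 hchar k) -lt0n. Qed.

(* The residue fact behind Lagrange inversion: [x^k] x p' p^(k-1) = [x^k] p^k,
   since x (p^k)' = k x p' p^(k-1). *)
Lemma coef_XD_pow (R : fieldType) (p : {poly R}) N : N.+1%:R != 0 :> R ->
  ('X * p^`() * p ^+ N)`_N.+1 = (p ^+ N.+1)`_N.+1.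
Proof.
move=> hN; apply: (mulIf hN); rewrite mulr_natr [RHS]mulr_natr -[RHS]coef_XD.
by rewrite deriv_exp /= mulrnAr coefMn mulrA.
Qed.

Lemma euler_pow_identity {R : comNzRingType} (Psi Phi : {poly R}) m N :
  ('X * (Psi ^+ m.+1)^`() + Psi ^+ m.+1 *+ m.+1) * Phi ^+ (m.+1 + N.+1) =
  ((Psi * Phi) ^+ m * ('X * (Psi * Phi)^`()) * Phi ^+ N.+1
   - (Psi * Phi) ^+ m.+1 * ('X * Phi^`() * Phi ^+ N)
   + (Psi * Phi) ^+ m.+1 * Phi ^+ N.+1) *+ m.+1.
Proof. by rewrite deriv_exp derivM /= exprD !exprMn !exprS; ring. Qed.

Section LagrangeResidue.
Context {R : fieldType}.
Hypothesis hchar : [pchar R] =i pred0.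
Context {Psi Phi : {poly R}} {n : nat}.
Hypothesis PsiPhi : congX n.+1 (Psi * Phi) 1.

Let PsiPhi_pow k : congX n.+1 ((Psi * Phi) ^+ k) 1.
Proof. by rewrite -(expr1n _ k); apply: congX_exp. Qed.

Let PsiPhi_XD : congX n.+1 ('X * (Psi * Phi)^`()) 0.
Proof. by have := congX_XD _ _ _ PsiPhi; rewrite -polyC1 derivC mulr0. Qed.

(* [x^(n-m)] (x (Psi^m)' + m Psi^m) Phi^n = n [n == m]: for m = n this is the
   constant term n (Psi Phi)^n, otherwise a coefficient of a derivative
   (up to the residue fact) and hence zero. *)
Lemma euler_residue m : (1 <= m)%N -> (m <= n)%N ->
  (('X * (Psi ^+ m)^`() + Psi ^+ m *+ m) * Phi ^+ n)`_(n - m) = (n == m)%:R * n%:R.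
Proof.
move=> h1 h2; case: (eqVneq n m) => [<-|nm].
  rewrite subnn mul1r coef0M coefD coef_XD mulr0n add0r coefMn mulrnAl.
  by rewrite -coef0M -exprMn PsiPhi_pow // coef1.
rewrite mul0r; case: m h1 h2 nm => [//|m] _ h2 nm.
have [N hN] : exists N, (n - m.+1)%N = N.+1 by exists (n - m.+1).-1; lia.
have -> : Phi ^+ n = Phi ^+ (m.+1 + N.+1) by congr (_ ^+ _); lia.
have hNn : (N.+1 < n.+1)%N by lia.
rewrite hN euler_pow_identity.
have trunc : congX n.+1
  (((Psi * Phi) ^+ m * ('X * (Psi * Phi)^`()) * Phi ^+ N.+1
   - (Psi * Phi) ^+ m.+1 * ('X * Phi^`() * Phi ^+ N)
   + (Psi * Phi) ^+ m.+1 * Phi ^+ N.+1) *+ m.+1)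
  ((1 * 0 * Phi ^+ N.+1 - 1 * ('X * Phi^`() * Phi ^+ N) + 1 * Phi ^+ N.+1) *+ m.+1).
  apply/congX_muln/congX_add; first apply: congX_add.
  - by apply: congX_mul => //; apply: congX_mul; [exact: PsiPhi_pow | exact: PsiPhi_XD].
  - by apply/congX_opp/congX_mul.
  - exact: congX_mul.
rewrite (trunc _ hNn) !mul1r mul0r sub0r coefMn coefD coefN.
by rewrite coef_XD_pow ?addNr ?mul0rn // (natf_pchar0_neq0 hchar).
Qed.

Lemma lagrange_system m : (1 <= m)%N -> (m <= n)%N ->
  \sum_(k < n.+1) (('X * Psi) ^+ m)`_k * (k%:R / n%:R * (Phi ^+ n)`_(n - k)) =
  (n == m)%:R.
Proof.
move=> h1 h2.
pose F k := (('X * Psi) ^+ m)`_k * (k%:R / n%:R * (Phi ^+ n)`_(n - k)).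
rewrite -(big_mkord xpredT F) (big_cat_nat (leq0n m) (leqW h2)) /=.
rewrite big_nat_cond big1 ?add0r; last first.
  by move=> k /andP[/andP[_ hk] _]; rewrite /F coef_XmulX hk mul0r.
have := big_addn 0 n.+1 m xpredT F; rewrite add0n => ->.
rewrite subSn // big_mkord.
have shift (j : 'I_(n - m).+1) : F (j + m)%N =
    n%:R^-1 * ((Psi ^+ m)`_j * ((j : nat) + m)%:R * (Phi ^+ n)`_(n - m - j)).
  by rewrite /F coef_XmulX ltnNge leq_addl /= addnK [(j + m)%N]addnC subnDA; ring.
rewrite (eq_bigr _ (fun j _ => shift j)) -mulr_sumr.
have -> : \sum_(j < (n - m).+1)
      (Psi ^+ m)`_j * ((j : nat) + m)%:R * (Phi ^+ n)`_(n - m - j) =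
    (('X * (Psi ^+ m)^`() + Psi ^+ m *+ m) * Phi ^+ n)`_(n - m).
  rewrite coefM; apply: eq_bigr => j _.
  by rewrite coefD coef_XD coefMn -mulrnDr mulr_natr.
rewrite euler_residue // mulrCA mulVf ?mulr1 //.
by apply: (natf_pchar0_neq0 hchar); lia.
Qed.

End LagrangeResidue.

Section Reversion.
Context {R : fieldType}.
Hypothesis hchar : [pchar R] =i pred0.
Context {Psi Phi A : {poly R}} {n : nat}.
Hypothesis Psi0 : Psi`_0 != 0.
Hypothesis A0 : A`_0 = 0.
Hypothesis FA : congX n.+1 (('X * Psi) \Po A) 'X.
Hypothesis PsiPhi : congX n.+1 (Psi * Phi) 1.

(* The coefficients [x^n] A^k solve the triangular system: F(A)^m = x^m. *)
Lemma reversion_system m :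
  \sum_(k < n.+1) (('X * Psi) ^+ m)`_k * (A ^+ k)`_n = (n == m)%:R.
Proof.
have := congX_exp _ _ _ m FA n (ltnSn n).
by rewrite -rmorphXn /= coefXn coef_comp_trunc.
Qed.

Lemma lagrange_inversion m : (1 <= m)%N -> (m <= n)%N ->
  (A ^+ m)`_n = m%:R / n%:R * (Phi ^+ n)`_(n - m).
Proof.
move=> h1 h2; apply/eqP; rewrite -subr_eq0; apply/eqP; move: m h1 h2.
apply: (@triangular_system_zero _ n (fun k m' => (('X * Psi) ^+ m')`_k)
  (fun k => (A ^+ k)`_n - k%:R / n%:R * (Phi ^+ n)`_(n - k))).
- move=> m' h1 h2; under eq_bigr do rewrite mulrBr.
  by rewrite sumrB reversion_system (lagrange_system hchar PsiPhi) // subrr.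
- by move=> k m' hk; rewrite coef_XmulX hk.
- move=> m'; rewrite coef_XmulX ltnn subnn.
  by rewrite -horner_coef0 horner_exp horner_coef0 expf_neq0.
Qed.

End Reversion.

(* For p with invertible constant term c^-1, q = 1 - c p has no constant term
   and c \sum_(k <= n) q^k is the inverse of p modulo x^(n+1). *)
Definition inverse_defect {R : fieldType} (p : {poly R}) : {poly R} :=
  1 - (p`_0)^-1%:P * p.

Definition trunc_inverse {R : fieldType} (p : {poly R}) (n : nat) : {poly R} :=
  (p`_0)^-1%:P * \sum_(k < n.+1) inverse_defect p ^+ k.

Section TruncatedInverse.
Context {R : fieldType} {Psi : {poly R}}.
Hypothesis Psi0 : Psi`_0 != 0.

Local Notation q := (inverse_defect Psi).

Lemma inverse_defect_coef0 : q`_0 = 0.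
Proof. by rewrite coefB coef1 coefCM mulVf ?subrr. Qed.

Lemma congX_defect_pow M x : congX M (1 + q ^+ M * x) 1.
Proof.
rewrite (divX _ inverse_defect_coef0) exprMn_comm -?mulrA; last first.
  exact/commr_sym/commr_polyX.
exact: congX_addXn.
Qed.

Lemma trunc_inverseP n : congX n.+1 (Psi * trunc_inverse Psi n) 1.
Proof.
have [x hx] := neg_binomial_trunc q n 0.
have -> : Psi * trunc_inverse Psi n =
    (\sum_(k < n.+1) q ^+ k *+ 'C(0 + k, k)) * (1 - q) ^+ 1.
  under eq_bigr do rewrite add0n binn mulr1n.
  by rewrite /trunc_inverse /inverse_defect expr1; ring.
by rewrite hx; apply: congX_defect_pow.
Qed.

Lemma coef0_trunc_inverse_pow n : (trunc_inverse Psi n ^+ n)`_0 = 1 / Psi`_0 ^+ n.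
Proof.
have := trunc_inverseP n 0 (ltn0Sn n); rewrite coef0M coef1 /= => hinv.
rewrite -horner_coef0 horner_exp horner_coef0 div1r -exprVn.
by congr (_ ^+ _); rewrite -[LHS](mulKf Psi0) hinv mulr1.
Qed.

(* Binomial series: Phi^n = c^n (1 - q)^-n = c^n \sum_k C(n-1+k, k) q^k. *)
Lemma trunc_inverse_pow_binomial n N : (0 < n)%N -> (N <= n)%N ->
  congX N.+1 (trunc_inverse Psi n ^+ n)
    (Psi`_0 ^- n *: \sum_(k < N.+1) q ^+ k *+ 'C(n.-1 + k, k)).
Proof.
move=> hn hN; have [x hx] := neg_binomial_trunc q N n.-1; rewrite prednK // in hx.
set S := \sum_(k < N.+1) _ in hx *; set Phi := trunc_inverse Psi n.
have one_q : 1 - q = (Psi`_0)^-1%:P * Psi by rewrite /inverse_defect opprB addrC subrK.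
have PsiPhi_n : congX N.+1 ((Psi * Phi) ^+ n) 1.
  rewrite -(expr1n _ n); apply: congX_exp.
  by apply: (congX_weak _ _ _ _ _ (trunc_inverseP n)); rewrite ltnS.
apply: (@congX_trans _ _ _ (Phi ^+ n * (S * (1 - q) ^+ n))).
  rewrite -{1}[Phi ^+ n]mulr1; apply: congX_mul => //; apply: congX_sym.
  by rewrite hx; apply: congX_defect_pow.
have -> : Phi ^+ n * (S * (1 - q) ^+ n) = (Psi * Phi) ^+ n * (Psi`_0 ^- n *: S).
  by rewrite one_q -mul_polyC -exprVn rmorphXn /= !exprMn; ring.
by rewrite -[X in congX _ _ X]mul1r; apply: congX_mul.
Qed.

(* For N > 0, binomial expansion of q^k = (1 - c Psi)^k, without its constant term. *)
Lemma coef_defect_pow k N : (0 < N)%N ->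
  (q ^+ k)`_N =
    \sum_(1 <= j < k.+1) ((-1) ^+ j / Psi`_0 ^+ j * 'C(k, j)%:R * (Psi ^+ j)`_N).
Proof.
move=> hN; rewrite (_ : q = (- (Psi`_0)^-1)%:P * Psi + 1); last first.
  by rewrite /inverse_defect rmorphN /=; ring.
rewrite exprD1n coef_sum big_ord_recl /= expr0 coefMn coef1 gtn_eqF // mul0rn add0r.
rewrite big_add1 /= big_mkord; apply: eq_bigr => j _.
rewrite coefMn exprMn -rmorphXn /= coefCM /bump /= add1n [in LHS]exprNn exprVn.
by rewrite -mulr_natr; ring.
Qed.

Lemma coef_trunc_inverse_pow n N : (0 < N)%N -> (N < n)%N ->
  (trunc_inverse Psi n ^+ n)`_N = 1 / Psi`_0 ^+ n *
    \sum_(1 <= k < N.+1) 'C(n + k - 1, n - 1)%:R *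
      \sum_(1 <= j < k.+1) ((-1) ^+ j / Psi`_0 ^+ j * 'C(k, j)%:R * (Psi ^+ j)`_N).
Proof.
move=> hN hNn; have hn : (0 < n)%N by lia.
rewrite (trunc_inverse_pow_binomial _ _ hn (ltnW hNn) N (ltnSn N)).
rewrite coefZ coef_sum div1r; congr (_ * _).
rewrite big_ord_recl /= coefMn expr0 coef1 gtn_eqF // mul0rn add0r.
rewrite big_add1 /= big_mkord; apply: eq_bigr => k _.
rewrite coefMn coef_defect_pow // -[LHS]mulr_natl /bump /= add1n.
congr (_%:R * _); rewrite -bin_sub ?leq_addl //; congr 'C(_, _); lia.
Qed.

End TruncatedInverse.

Theorem theorem3 (R : fieldType) (hchar : [pchar R] =i pred0)
  (f a : nat -> R) (hf0 : f 0%N = 0) (hf1 : f 1%N != 0)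
  (ha0 : a 0%N = 0) (hinv : forall n, fps_comp f a n = fps_X R n)
  (n m : nat) (hm : (1 <= m)%N) (hmn : (m <= n)%N) :
  composita a n m =
    if n == m then 1 / composita f 1 1 ^+ n
    else m%:R / (n%:R * composita f 1 1 ^+ n) *
      \sum_(1 <= k < (n - m).+1)
         'C(n + k - 1, n - 1)%:R *
         \sum_(1 <= j < k.+1)
            ((-1) ^+ j / composita f 1 1 ^+ j * 'C(k, j)%:R *
             composita f (n - m + j) j).
Proof.
pose L := (n + n)%N; pose T g := \poly_(j < L.+1) g j : {poly R}.
pose Psi := drop_poly 1 (T f).
have TfX : T f = 'X * Psi by apply: divX; rewrite coef_poly hf0.
have Psi0 : Psi`_0 = f 1%N by rewrite coef_drop_poly coef_poly ltnS; case: ifP => //; lia.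
have compo_f N j : (N + j <= L)%N -> composita f (N + j) j = (Psi ^+ j)`_N.
  move=> hL; rewrite (composita_trunc _ _ _ j hf0 hL) -/(T f) TfX.
  by rewrite coef_XmulX ltnNge leq_addl addnK.
have f11 : composita f 1 1 = Psi`_0 by rewrite Psi0 (compo_f 0%N 1%N) ?expr1 //; lia.
have FA : congX n.+1 (('X * Psi) \Po T a) 'X.
  by move=> i hi; rewrite -TfX fps_comp_poly ?hinv ?coefX //; lia.
have Psi0_neq0 : Psi`_0 != 0 by rewrite Psi0.
have Ta0 : (T a)`_0 = 0 by rewrite coef_poly.
rewrite f11 (composita_trunc _ _ _ m ha0 (leq_addr n n)).
rewrite (lagrange_inversion hchar Psi0_neq0 Ta0 FA (trunc_inverseP Psi0_neq0 n)) //.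
case: eqP => [<-|/eqP nm].
  rewrite subnn coef0_trunc_inverse_pow // mulfV ?mul1r //.
  by apply: (natf_pchar0_neq0 hchar); lia.
rewrite (coef_trunc_inverse_pow Psi0_neq0); try lia.
rewrite invfM div1r !mulrA; congr (_ * _).
apply: eq_big_nat => k /andP[_ hk]; congr (_ * _).
apply: eq_big_nat => j /andP[_ hj]; rewrite compo_f //; lia.
Qed.
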